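(* Let $k\ge2$ be an integer and $\Gamma_k(t)=\Psi_k(t^3-t^2+7t+1)\in\mathbb{Q}[t]$. Then the map $\alpha\mapsto-\alpha^2-7$ is a $\operatorname{Gal}(\overline{\mathbb{Q}}/\mathbb{Q})$-equivariant bijection from the set of complex roots of $\Gamma_k$ to the set of complex roots of $\widetilde{\Delta}_{3k,3}$. In particular, $\widetilde{\Delta}_{3k,3}$ is irreducible over $\mathbb{Q}$ if and only if $\Gamma_k$ is irreducible over $\mathbb{Q}$.
   Context: $\Psi_k$ denotes the $k$-th cyclotomic polynomial. For the family $f_c(z)=z^2+c$, let $\delta_3(x,c)$ be the third multiplier polynomial (the polynomial monic in $x$ with $\delta_3(x,c)^3=\operatorname{Res}_z(\Phi_3^*(z,c),x-(f_c^{\circ3})'(z))$, where $\Phi_3^*(z,c)=(f_c^{\circ3}(z)-z)/(f_c(z)-z)$); explicitly $\delta_3(x,C/4)=x^2-(2C+16)x+(C^3+8C^2+16C+64)$. Set $\widetilde{\Delta}_{3k,3}(C)=\operatorname{Res}_x(\Psi_k(x),\delta_3(x,C/4))\in\mathbb{Z}[C]$. Roots are taken without multiplicity. *)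

From mathcomp Require Import all_boot all_order all_algebra all_field.
Set Implicit Arguments. Unset Strict Implicit. Unset Printing Implicit Defensive.
Import GRing.Theory Num.Theory.
Local Open Scope ring_scope.

Definition Gamma_k (k : nat) : {poly int} :=
  'Phi_k \Po ('X^3 - 'X^2 + 7%:R *: 'X + 1).

(* delta_3(x, C/4) = x^2 - (2C+16) x + (C^3 + 8C^2 + 16C + 64),
   as a polynomial in x (outer variable) with coefficients in Z[C]. *)
Definition delta3C : {poly {poly int}} :=
  'X^2 - ((2%:R *: 'X + 16%:R)%:P) * 'X
  + ('X^3 + 8%:R *: 'X^2 + 16%:R *: 'X + 64%:R)%:P.

(* tilde Delta_{3k,3}(C) = Res_x(Psi_k(x), delta_3(x, C/4)) in Z[C] *)
Definition Delta3k3 (k : nat) : {poly int} :=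
  resultant (map_poly polyC 'Phi_k) delta3C.

Definition rootQbar (p : {poly int}) (z : algC) : bool :=
  root (map_poly intr p) z.

Definition ratpoly (p : {poly int}) : {poly rat} := map_poly intr p.

From mathcomp Require Import all_boot all_order all_algebra all_field.
From mathcomp Require Import ring zify.
Import Order.TTheory GRing.Theory Num.Theory.
Local Open Scope ring_scope.

(* Write g a := a^3 - a^2 + 7 a + 1. The roots of Gamma_k are the a such that g a is a
   primitive k-th root of unity, and delta_3(z, -a^2-7) = (z - g a) (z - g (-a)), so
   a |-> -a^2-7 maps the roots of Gamma_k onto those of Delta. It is injective because
   a and -a are never both roots: otherwise every conjugate y of the algebraic integer a
   would satisfy |g y| = |g (-y)| = 1, which forces |y| < 1, whereas a nonzero algebraic
   integer has a conjugate of modulus at least 1.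
   If Gamma_k is irreducible, a nonconstant factor q of Delta has q(-t^2-7) divisible by
   the coprime Gamma_k(t) and Gamma_k(-t), so deg q >= deg Gamma_k >= deg Delta.
   Conversely, if Gamma_k = r q then Delta divides the polynomial N(q) with
   N(q)(-t^2-7) = q(t) q(-t), so each root of r is a root of q or the opposite of one,
   both excluded (Gamma_k is separable). *)

Local Notation pZtoC := (map_poly (intr : int -> algC)).
Local Notation pQtoC := (map_poly (ratr : rat -> algC)).

Lemma norm_prim_root {k} {z : algC} : k.-primitive_root z -> `|z| = 1.
Proof.
move=> z_prim; apply/eqP; rewrite -(pexpr_eq1 (prim_order_gt0 z_prim)) ?normr_ge0 //.
by rewrite -normrX (prim_expr_order z_prim) normr1.
Qed.

Lemma prim_root1 k : (1 < k)%N -> ~~ k.-primitive_root (1 : algC).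
Proof.
move=> k_gt1; apply/negP => prim1; have := eq_prim_root_expr prim1 0 1.
by rewrite !expr1n eqxx mod0n modn_small.
Qed.

Lemma root_Cyclotomic k z : (0 < k)%N -> root (pZtoC 'Phi_k) z = k.-primitive_root z.
Proof.
move=> k_gt0; have [w w_prim] := C_prim_root_exists k_gt0.
by rewrite (Cintr_Cyclotomic w_prim) root_cyclotomic.
Qed.

Lemma Cyclotomic_separable k : (0 < k)%N -> separable_poly (pZtoC 'Phi_k).
Proof.
move=> k_gt0; apply: (@dvdp_separable _ ('X^k - 1)); last first.
  by apply: separable_Xn_sub_1; rewrite pnatr_eq0 -lt0n.
have -> : 'X^k - 1 = pZtoC ('X^k - 1) by rewrite rmorphB rmorph1 /= map_polyXn.
rewrite -(prod_Cyclotomic k_gt0) (big_rem k) /= ?rmorphM ?dvdp_mulr //.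
by rewrite -dvdn_divisors.
Qed.

Lemma separable_root_deriv {F : fieldType} {p : {poly F}} {x : F} :
  separable_poly p -> root p x -> p^`().[x] != 0.
Proof. by rewrite unlock => /coprimep_root; apply. Qed.

Lemma Aint_conjugate_norm_ge1 {x} : x \in Aint -> x != 0 ->
  exists2 y, root (minCpoly x) y & 1 <= `|y|.
Proof.
move=> Ax nz_x; have [p [Dm mon_p] min_p] := minCpolyP x.
have [r Dr] := closed_field_poly_normal (minCpoly x).
rewrite (monicP (minCpoly_monic x)) scale1r in Dr.
have nz_m0 : (minCpoly x)`_0 != 0.
  apply: contra nz_x => /eqP m0.
  have /factor_theorem[s Dp] : root p 0.
    by rewrite -(fmorph_root (ratr : {rmorphism rat -> algC})) rmorph0 -Dm /root horner_coef0 m0.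
  have nz_s : s != 0 by apply: contra_neq (monic_neq0 mon_p); rewrite Dp => ->; rewrite mul0r.
  have := root_minCpoly x; rewrite Dm Dp rmorphM rootM /= map_polyXsubC rmorph0.
  case/orP => [|]; last by rewrite root_XsubC.
  rewrite min_p => /(dvdp_leq nz_s).
  by rewrite Dp size_mul ?polyXsubC_eq0 // size_XsubC addn2 ltnn.
have Zm0 : (minCpoly x)`_0 \in Num.int by move: Ax; rewrite unfold_in => /polyOverP.
have := norm_intr_ge1 Zm0 nz_m0.
rewrite Dr coef0_prod_XsubC normrM normrX normrN1 expr1n mul1r normr_prod.
case: r Dr => [|y r] Dr.
  by have := size_minCpoly x; rewrite Dr big_nil size_poly1.
have [/hasP[z rz z1] | /hasPn lt1] := boolP (has (fun z => 1 <= `|z|) (y :: r)).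
  by exists z => //; move: rz; rewrite -root_prod_XsubC -Dr.
have {}lt1 z : z \in y :: r -> `|z| < 1.
  by move=> rz; rewrite real_ltNge ?real1 ?normr_real ?lt1.
suff : \prod_(z <- y :: r) `|z| < 1.
  rewrite real_ltNge ?real1 ?rpred_prod // => [/negP // | z _]; exact: normr_real.
rewrite big_cons; apply: le_lt_trans (lt1 y (mem_head _ _)).
rewrite ler_piMr // big_seq prodr_ile1 // => z rz.
by rewrite normr_ge0 ltW // lt1 // inE rz orbT.
Qed.

Lemma root_minCpoly_conj (q : {poly rat}) x y :
  root (pQtoC q) x -> root (minCpoly x) y -> root (pQtoC q) y.
Proof.
have [p [Dm _] min_p] := minCpolyP x.
by rewrite min_p => p_q; apply: root_dvdp; rewrite Dm dvdp_map.
Qed.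

Lemma irredp_dvdp_root (F L : fieldType) (iota : {rmorphism F -> L}) (p h : {poly F}) x :
    irreducible_poly p -> h != 0 ->
  root (map_poly iota p) x -> root (map_poly iota h) x -> p %| h.
Proof.
move=> p_irr nz_h px hx.
have gcd_x : root (map_poly iota (gcdp p h)) x by rewrite gcdp_map root_gcd px.
have /p_irr/(_ (dvdp_gcdl p h)) : size (gcdp p h) != 1.
  rewrite -(size_map_poly iota) gtn_eqF // (root_size_gt1 _ gcd_x) //.
  by rewrite map_poly_eq0 gcdp_eq0 negb_and nz_h orbT.
by move/eqp_dvdl <-; apply: dvdp_gcdr.
Qed.

Lemma even_poly_comp_sqr (R : idomainType) (h : {poly R}) :
  2%:R != 0 :> R -> h \Po - 'X = h -> even_poly h \Po 'X^2 = h.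
Proof.
move=> two_nz h_even; set e := even_poly h \Po 'X^2; set o := (odd_poly h \Po 'X^2) * 'X.
have sqr_opp : 'X^2 \Po - 'X = 'X^2 :> {poly R} by rewrite comp_Xn_poly sqrrN.
have o_opp : o \Po - 'X = - o by rewrite comp_polyM comp_polyX -comp_polyA sqr_opp mulrN.
have h_eo : h = e + o by rewrite poly_even_odd.
have : h - (h \Po - 'X) = o *+ 2.
  by rewrite {1 2}h_eo comp_polyD -comp_polyA sqr_opp o_opp mulr2n; ring.
rewrite h_even subrr => /esym/eqP.
rewrite -mulr_natl mulf_eq0 -polyC_natr polyC_eq0 (negPf two_nz) => /eqP o0.
by rewrite h_eo o0 addr0.
Qed.

Lemma root_resultant_polyC (p : {poly int}) (q : {poly {poly int}}) (b : algC) :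
    p \is monic -> q \is monic ->
  root (pZtoC (resultant p^:P q)) b <->
  exists z, root (pZtoC p) z && root (map_poly (fun c => (pZtoC c).[b]) q) z.
Proof.
move=> p_monic q_monic.
have cfu : commr_rmorph (intr : int -> algC) b by move=> c; apply: mulrC.
pose phi := horner_morph cfu.
have phi_p : map_poly phi p^:P = pZtoC p.
  by rewrite -map_poly_comp; apply: eq_map_poly => c /=; rewrite /phi horner_morphC.
have /map_resultant res_phi : phi (lead_coef p^:P) != 0.
  rewrite lead_coef_map_inj ?(monicP p_monic) ?polyC1 /phi ?rmorph1 ?oner_eq0 //.
  exact: polyC_inj.
rewrite /root [X in X == 0](res_phi _) ?(monicP q_monic) ?rmorph1 ?oner_eq0 //.
rewrite phi_p resultant_eq0 -/(root _ _); split => [gcd_gt1 | [z /andP[pz qz]]].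
  have /closed_rootP[z] : size (gcdp (pZtoC p) (map_poly phi q)) != 1 by rewrite gtn_eqF.
  by rewrite root_gcd; exists z.
apply: root_size_gt1 (_ : root _ z); last by rewrite root_gcd; apply/andP.
by rewrite gcdp_eq0 negb_and monic_neq0 ?orTb // monic_map.
Qed.

(* Each term of the Leibniz expansion of the Sylvester determinant multiplies
   (size q).-1 constant entries with (size p).-1 entries of size at most n.+1. *)
Lemma size_resultant_polyC_leq {R : comNzRingType} (p : {poly R}) (q : {poly {poly R}}) n :
    (forall i, size (q`_i)%R <= n.+1)%N ->
  (size (resultant p^:P q) <= (size p).-1 * n + 1)%N.
Proof.
move=> q_coef_leq; rewrite /resultant /determinant.
apply: leq_trans (size_sum _ _ _) _; apply/bigmax_leqP => s _.
rewrite size_Msign (leq_trans (size_poly_prod_leq _ _)) // card_ord.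
have size_pC : (size p^:P).-1 = (size p).-1 by rewrite size_map_polyC.
set dq := (size q).-1; set dp := (size p^:P).-1 in size_pC *.
pose w (i : 'I_(dq + dp)) := if (i < dq)%N then 1%N else n.+1.
have size_entry i j : (size (Sylvester_mx p^:P q i j) <= w i)%N.
  rewrite Sylvester_mxE /w; case: splitP => l _ /=.
    rewrite coef_map /=; case: (l <= j)%N; rewrite ?mulr0n ?mulr1n ?size_poly0 //.
    by rewrite size_polyC leq_b1.
  by case: (l <= j)%N; rewrite ?mulr0n ?mulr1n ?size_poly0.
have sum_w : (\sum_i w i = dq + n.+1 * dp)%N.
  rewrite big_split_ord /= /w (eq_bigr (fun=> 1%N)) => [|i _]; last by rewrite /= ltn_ord.
  rewrite [X in (_ + X)%N](eq_bigr (fun=> n.+1)) => [|i _]; last by rewrite /= ltnNge leq_addr.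
  by rewrite !sum_nat_const !card_ord muln1 mulnC.
apply: leq_trans (leq_sub2r _ (_ : _ <= (\sum_i w i).+1)%N) _.
  by rewrite ltnS; apply: leq_sum => i _; apply: size_entry.
rewrite sum_w; lia.
Qed.

Lemma pQtoC_ratpoly p : pQtoC (ratpoly p) = pZtoC p.
Proof. by rewrite /ratpoly -map_poly_comp (eq_map_poly (fun c => rmorph_int _ c)). Qed.

Lemma rootQbar_ratpoly p z : rootQbar p z = root (pQtoC (ratpoly p)) z.
Proof. by rewrite pQtoC_ratpoly. Qed.

Lemma size_ratpoly p : size (ratpoly p) = size p.
Proof. exact/size_map_inj_poly/rmorph0/intr_inj. Qed.

Lemma root_map_comp_opp (p : {poly rat}) z :
  root (pQtoC (p \Po - 'X)) z = root (pQtoC p) (- z).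
Proof. by rewrite map_comp_poly raddfN /= map_polyX /root horner_comp hornerN hornerX. Qed.

Definition cubic : {poly int} := 'X^3 - 'X^2 + 7%:R *: 'X + 1.

Definition cubicC (a : algC) : algC := a ^+ 3 - a ^+ 2 + 7%:R * a + 1.

Lemma map_cubic : pZtoC cubic = 'X^3 - 'X^2 + 7%:R *: 'X + 1.
Proof.
by rewrite !(rmorphD, rmorphN, rmorph1) /= !map_polyXn map_polyZ map_polyX /= rmorph_nat.
Qed.

Lemma horner_cubic a : (pZtoC cubic).[a] = cubicC a.
Proof. by rewrite map_cubic -polyC1 !(hornerD, hornerN, hornerZ, hornerXn, hornerX, hornerC). Qed.

Lemma horner_deriv_cubic a : (pZtoC cubic)^`().[a] = 3%:R * a ^+ 2 - 2%:R * a + 7%:R.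
Proof.
rewrite map_cubic !derivE !(hornerD, hornerN, hornerZ, hornerMn, hornerXn, hornerX, hornerC).
ring.
Qed.

Lemma cubic_split : cubic = 'X^3 + (- 'X^2 + 7%:R *: 'X + 1).
Proof. by rewrite /cubic !addrA. Qed.

Lemma size_cubic_tail : (size (- 'X^2 + 7%:R *: 'X + 1 : {poly int})%R < 4)%N.
Proof.
rewrite (leq_ltn_trans (size_polyD _ _)) // gtn_max size_poly1 andbT.
rewrite (leq_ltn_trans (size_polyD _ _)) // gtn_max size_polyN size_polyXn /=.
by rewrite (leq_ltn_trans (size_scale_leq _ _)) // size_polyX.
Qed.

Lemma size_cubic : size cubic = 4%N.
Proof. by rewrite cubic_split size_polyDl size_polyXn // size_cubic_tail. Qed.

Lemma cubic_monic : cubic \is monic.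
Proof.
by rewrite monicE cubic_split lead_coefDl ?lead_coefXn // size_polyXn size_cubic_tail.
Qed.

Lemma cubicC_opp_unit_norm_lt1 {a} :
  `|cubicC a| = 1 -> `|cubicC (- a)| = 1 -> `|a| < 1.
Proof.
move=> n1 n2.
have sum : 2%:R * a ^+ 2 = 2%:R - cubicC a - cubicC (- a) by rewrite /cubicC; ring.
have diff : cubicC a - cubicC (- a) = 2%:R * (a * (a ^+ 2 + 7%:R)) by rewrite /cubicC; ring.
have a2_le2 : `|a| ^+ 2 <= 2%:R.
  rewrite -(ler_pM2l (ltr0n _ 2)) -normrX -[X in X * _](normr_nat algC) -normrM sum.
  apply: le_trans (ler_normB _ _) _; rewrite n2.
  apply: le_trans (lerD (ler_normB _ _) (lexx 1)) _.
  by rewrite normr_nat n1 !natr1 -natrM ler_nat.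
have a27_ge5 : 5%:R <= `|a ^+ 2 + 7%:R|.
  have := ler_normB (a ^+ 2 + 7%:R) (a ^+ 2); rewrite addrAC subrr add0r normr_nat normrX.
  rewrite -lerBlDr => /(le_trans _); apply; rewrite lerBrDl.
  by apply: le_trans (lerD a2_le2 (lexx _)) _; rewrite -natrD.
have : `|a| * 5%:R <= 1.
  apply: le_trans (ler_wpM2l (normr_ge0 _) a27_ge5) _.
  rewrite -(ler_pM2l (ltr0n _ 2)) mulr1 -normrM -[X in X * _](normr_nat algC) -normrM -diff.
  by apply: le_trans (ler_normB _ _) _; rewrite n1 n2.
have [-> | a_nz] := eqVneq a 0; first by rewrite normr0 ltr01.
by move/(lt_le_trans _); apply; rewrite ltr_pMr ?normr_gt0 // ltr1n.
Qed.

Lemma cubic_deriv_neq0 a : `|cubicC a| = 1 -> 3%:R * a ^+ 2 - 2%:R * a + 7%:R != 0.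
Proof.
move=> norm_z; apply/eqP => deriv0; set z := cubicC a in norm_z.
(* Eliminating [a] between [z = cubicC a] and a vanishing derivative. *)
have : 27%:R * z ^+ 2 - 176%:R * z + 1472%:R = 0.
  have -> : 27%:R * z ^+ 2 - 176%:R * z + 1472%:R = (3%:R * a ^+ 2 - 2%:R * a + 7%:R) *
      (9%:R * a ^+ 4 - 12%:R * a ^+ 3 + 106%:R * a ^+ 2 - 68%:R * a + 189%:R).
    by rewrite /z /cubicC; ring.
  by rewrite deriv0 mul0r.
move/eqP; rewrite addr_eq0 => /eqP/(congr1 Num.norm); rewrite normrN normr_nat => norm_eq.
have := ler_normB (27%:R * z ^+ 2) (176%:R * z).
by rewrite norm_eq !normrM norm_z !normr_nat !mulr1 -natrD ler_nat.
Qed.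

Lemma Gamma_monic k : Gamma_k k \is monic.
Proof.
rewrite monicE lead_coef_comp ?size_cubic //.
by rewrite (monicP cubic_monic) (monicP (Cyclotomic_monic k)) expr1n mulr1.
Qed.

Lemma size_Gamma k : size (Gamma_k k) = (totient k * 3).+1.
Proof.
rewrite (polySpred (monic_neq0 (Gamma_monic k))) size_comp_poly size_cubic.
by rewrite size_Cyclotomic.
Qed.

Definition delta3 (z b : algC) : algC :=
  z ^+ 2 - (2%:R * b + 16%:R) * z + (b ^+ 3 + 8%:R * b ^+ 2 + 16%:R * b + 64%:R).

Lemma delta3_factor a z :
  delta3 z (- a ^+ 2 - 7%:R) = (z - cubicC a) * (z - cubicC (- a)).
Proof. by rewrite /delta3 /cubicC; ring. Qed.

Lemma delta3C_monic : delta3C \is monic.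
Proof.
rewrite monicE /delta3C -addrA lead_coefDl ?lead_coefXn // size_polyXn.
rewrite (leq_ltn_trans (size_polyD _ _)) // gtn_max size_polyN size_polyC.
rewrite (leq_ltn_trans (size_polyMleq _ _)) ?size_polyX ?size_polyC /=.
  by rewrite (leq_ltn_trans (leq_b1 _)).
by case: (_ != 0).
Qed.

Lemma horner_delta3C b z : (map_poly (fun c => (pZtoC c).[b]) delta3C).[z] = delta3 z b.
Proof.
have cfu : commr_rmorph (intr : int -> algC) b by move=> c; apply: mulrC.
have pZtoCD (p q : {poly int}) : pZtoC (p + q) = pZtoC p + pZtoC q by apply: rmorphD.
have phi1 : horner_morph cfu (2%:R *: 'X + 16%:R) = 2%:R * b + 16%:R.
  by rewrite /horner_morph pZtoCD map_polyZ map_polyX !rmorph_nat !hornerE.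
have phi0 : horner_morph cfu ('X^3 + 8%:R *: 'X^2 + 16%:R *: 'X + 64%:R) =
            b ^+ 3 + 8%:R * b ^+ 2 + 16%:R * b + 64%:R.
  rewrite /horner_morph 3!pZtoCD !map_polyZ !map_polyXn map_polyX !rmorph_nat !hornerE.
  ring.
rewrite -[map_poly _ _]/(map_poly (horner_morph cfu) delta3C) /delta3C.
rewrite rmorphD rmorphB -![GRing.RMorphism.sort _ _]/(map_poly _ _) map_polyXn.
rewrite rmorphM -![GRing.RMorphism.sort _ _]/(map_poly _ _) map_polyX !map_polyC.
transitivity (('X^2 - (2%:R * b + 16%:R)%:P * 'X
  + (b ^+ 3 + 8%:R * b ^+ 2 + 16%:R * b + 64%:R)%:P).[z]); first by rewrite -phi1 -phi0.
by rewrite !(hornerD, hornerN, hornerM, hornerXn, hornerX, hornerC).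
Qed.

Lemma size_coef_delta3C i : (size (delta3C`_i)%R <= 4)%N.
Proof.
have sizeD (p q : {poly int}) : (size p <= 4)%N -> (size q <= 4)%N -> (size (p + q)%R <= 4)%N.
  by move=> p4 q4; rewrite (leq_trans (size_polyD _ _)) // geq_max p4.
have sizeZ (c : int) (p : {poly int}) : (size p <= 4)%N -> (size (c *: p) <= 4)%N.
  by move/(leq_trans (size_scale_leq _ _)) => ->.
have sizeN (m : nat) : (size (m%:R : {poly int}) <= 4)%N.
  by rewrite -polyC_natr (leq_trans (size_polyC_leq1 _)).
have sizeX : (size ('X : {poly int}) <= 4)%N by rewrite size_polyX.
have sizeXn j : (j < 4)%N -> (size ('X^j : {poly int}) <= 4)%N by rewrite size_polyXn.
rewrite /delta3C coefD coefB coefXn coefCM coefX !coefC.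
case: i => [|[|[|i]]] /=; rewrite ?(mulr0, mulr1n, mulr1, oppr0, subr0, add0r, addr0).
- apply: (sizeD _ _ _ (sizeN _)); apply: (sizeD _ _ _ (sizeZ _ _ sizeX)).
  exact: sizeD _ _ (sizeXn 3 isT) (sizeZ _ _ (sizeXn 2 isT)).
- by rewrite size_opp (sizeD _ _ (sizeZ _ _ sizeX) (sizeN _)).
- by rewrite size_poly1.
by rewrite size_poly0.
Qed.

Lemma size_Delta_leq k : (size (Delta3k3 k) <= totient k * 3 + 1)%N.
Proof.
have := size_resultant_polyC_leq 'Phi_k delta3C 3 size_coef_delta3C.
by rewrite size_Cyclotomic.
Qed.

Definition fpoly : {poly rat} := (- 7%:R)%:P - 'X^2.

Lemma fpoly_comp_opp : fpoly \Po - 'X = fpoly.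
Proof. by rewrite /fpoly comp_polyB comp_polyC comp_Xn_poly sqrrN. Qed.

Lemma size_fpoly : size fpoly = 3%N.
Proof. by rewrite /fpoly -opprB size_polyN size_XnsubC. Qed.

Lemma horner_map_comp_fpoly q y :
  (pQtoC (q \Po fpoly)).[y] = (pQtoC q).[- y ^+ 2 - 7%:R].
Proof.
have pQtoCB (p r : {poly rat}) : pQtoC (p - r) = pQtoC p - pQtoC r by apply: rmorphB.
rewrite map_comp_poly horner_comp /fpoly pQtoCB map_polyC map_polyXn.
rewrite hornerD hornerN hornerXn hornerC; congr (_.[_]); rewrite addrC; congr (_ + _).
by rewrite -[LHS]/(ratr (- 7%:R)) rmorphN rmorph_nat.
Qed.

(* [q * (q \Po - 'X)] is even, hence a polynomial in [t^2 = (-7 - t) \Po fpoly]. *)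
Definition opp_norm (q : {poly rat}) : {poly rat} :=
  even_poly (q * (q \Po - 'X)) \Po ((- 7%:R)%:P - 'X).

Lemma opp_norm_comp_fpoly q : opp_norm q \Po fpoly = q * (q \Po - 'X).
Proof.
have oppX_opp : (- 'X) \Po (- 'X) = 'X :> {poly rat}.
  by rewrite -[in LHS]scaleN1r comp_polyZ comp_polyX scalerA mulN1r opprK scale1r.
rewrite /opp_norm -comp_polyA comp_polyB comp_polyC comp_polyX /fpoly.
rewrite [_ - _](_ : _ = 'X^2); last by ring.
apply: even_poly_comp_sqr; first by rewrite pnatr_eq0.
by rewrite comp_polyM -comp_polyA oppX_opp comp_polyXr mulrC.
Qed.

Lemma root_opp_norm q y :
  root (pQtoC (opp_norm q)) (- y ^+ 2 - 7%:R) = root (pQtoC q) y || root (pQtoC q) (- y).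
Proof.
rewrite /root -horner_map_comp_fpoly opp_norm_comp_fpoly rmorphM hornerM mulf_eq0.
by rewrite -!/(root _ _) root_map_comp_opp.
Qed.

Section GammaDelta.

Variable k : nat.
Hypothesis k_gt1 : (1 < k)%N.
Let k_gt0 : (0 < k)%N := ltnW k_gt1.

Local Notation GammaQ := (ratpoly (Gamma_k k)).
Local Notation DeltaQ := (ratpoly (Delta3k3 k)).

Lemma rootQbar_Gamma a : rootQbar (Gamma_k k) a = k.-primitive_root (cubicC a).
Proof.
rewrite /rootQbar map_comp_poly /root horner_comp horner_cubic -/(root _ _).
exact: root_Cyclotomic.
Qed.

Lemma Gamma_root0 : ~~ rootQbar (Gamma_k k) 0.
Proof.
rewrite rootQbar_Gamma [cubicC 0](_ : _ = 1) ?prim_root1 //.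
by rewrite /cubicC; ring.
Qed.

Lemma Gamma_root_opp {a} : rootQbar (Gamma_k k) a -> ~~ rootQbar (Gamma_k k) (- a).
Proof.
move=> Ga; apply/negP => Gna.
have Aa : a \in Aint.
  apply: root_monic_Aint Ga _ _; first exact: monic_map (Gamma_monic k).
  by apply/polyOverP => i; rewrite coef_map intr_int.
have nz_a : a != 0 by apply: contraTneq Ga => ->; apply: Gamma_root0.
have [y ma_y y_ge1] := Aint_conjugate_norm_ge1 Aa nz_a.
have Gy : root (pQtoC GammaQ) y.
  by apply: root_minCpoly_conj ma_y; rewrite -rootQbar_ratpoly.
have Gny : root (pQtoC (GammaQ \Po - 'X)) y.
  by apply: root_minCpoly_conj ma_y; rewrite root_map_comp_opp -rootQbar_ratpoly.
rewrite root_map_comp_opp -!rootQbar_ratpoly !rootQbar_Gamma in Gy Gny.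
have := cubicC_opp_unit_norm_lt1 (norm_prim_root Gy) (norm_prim_root Gny).
by rewrite real_ltNge ?real1 ?normr_real // y_ge1.
Qed.

Lemma Gamma_separable : separable_poly (pZtoC (Gamma_k k)).
Proof.
rewrite unlock; apply/Pdiv.ClosedField.root_coprimep => a.
rewrite -/(rootQbar _ a) rootQbar_Gamma => prim_z.
rewrite /Gamma_k map_comp_poly deriv_comp hornerM horner_comp.
rewrite -[map_poly _ 'Phi_k]/(pZtoC 'Phi_k) -![map_poly _ cubic]/(pZtoC cubic).
rewrite horner_cubic mulf_neq0 //.
  by apply: separable_root_deriv (Cyclotomic_separable _ k_gt0) _; rewrite root_Cyclotomic.
by rewrite horner_deriv_cubic cubic_deriv_neq0 // (norm_prim_root prim_z).
Qed.

Lemma rootQbar_Delta b :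
  rootQbar (Delta3k3 k) b <-> exists2 z, k.-primitive_root z & delta3 z b = 0.
Proof.
have res_root := root_resultant_polyC _ _ b (Cyclotomic_monic k) delta3C_monic.
split=> [/res_root[z /andP[Pz dz]] | [z Pz dz]].
  by exists z; [rewrite -root_Cyclotomic | apply/eqP; rewrite -horner_delta3C].
by apply/res_root; exists z; rewrite root_Cyclotomic // Pz /root horner_delta3C dz eqxx.
Qed.

Lemma Delta_root_of_Gamma_root a :
  rootQbar (Gamma_k k) a -> rootQbar (Delta3k3 k) (- a ^+ 2 - 7%:R).
Proof.
rewrite rootQbar_Gamma => Pa; apply/rootQbar_Delta.
by exists (cubicC a); rewrite // delta3_factor subrr mul0r.
Qed.

Lemma Gamma_root_of_Delta_root b :
  rootQbar (Delta3k3 k) b -> exists2 a, rootQbar (Gamma_k k) a & - a ^+ 2 - 7%:R = b.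
Proof.
move=> /rootQbar_Delta[z Pz].
pose a := sqrtC (- b - 7%:R); have Da : - a ^+ 2 - 7%:R = b by rewrite sqrtCK; ring.
rewrite -Da delta3_factor => /eqP; rewrite mulf_eq0 !subr_eq0 => /orP[]/eqP Dz.
  by exists a; rewrite // rootQbar_Gamma -Dz.
by exists (- a); rewrite ?sqrrN // rootQbar_Gamma -Dz.
Qed.

Lemma Gamma_root_sqr_inj a c :
  rootQbar (Gamma_k k) a -> rootQbar (Gamma_k k) c ->
  - a ^+ 2 - 7%:R = - c ^+ 2 - 7%:R -> a = c.
Proof.
move=> Ga Gc /eqP; rewrite (can_eq (subrK _)) eqr_opp -subr_eq0 subr_sqr mulf_eq0.
rewrite subr_eq0 addr_eq0 => /orP[/eqP // | /eqP Dc].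
by move: Ga; rewrite Dc (negPf (Gamma_root_opp Gc)).
Qed.

Lemma Delta_neq0 : DeltaQ != 0.
Proof.
apply: contra Gamma_root0 => /eqP D0.
have /Gamma_root_of_Delta_root[a Ga Da] : rootQbar (Delta3k3 k) (- 0 ^+ 2 - 7%:R).
  by rewrite rootQbar_ratpoly D0 rmorph0 root0.
suff <- : a = 0 by [].
by move/addIr/oppr_inj/eqP: Da; rewrite !expr2 mul0r mulf_eq0 orbb => /eqP.
Qed.

Lemma Gamma_irr_Delta_irr : irreducible_poly GammaQ -> irreducible_poly DeltaQ.
Proof.
move=> G_irr.
have rootG a : root (pQtoC GammaQ) a = rootQbar (Gamma_k k) a by rewrite rootQbar_ratpoly.
have nz_G' : GammaQ \Po - 'X != 0.
  by rewrite comp_poly2_eq0 ?size_polyN ?size_polyX // irredp_neq0.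
have [a Ga] : exists a, rootQbar (Gamma_k k) a.
  have /closed_rootP[a] : size (pQtoC GammaQ) != 1 by rewrite size_map_poly gtn_eqF ?G_irr.1.
  by exists a; rewrite -rootG.
have G_G'_coprime : coprimep GammaQ (GammaQ \Po - 'X).
  apply: contraT; rewrite coprimep_def => /(G_irr _)/(_ (dvdp_gcdl _ _))/eqp_dvdl G_G'.
  have : root (pQtoC (GammaQ \Po - 'X)) a.
    by apply: root_dvdp (_ : root (pQtoC GammaQ) a); rewrite ?dvdp_map -?G_G' ?dvdp_gcdr ?rootG.
  by rewrite root_map_comp_opp rootG (negPf (Gamma_root_opp Ga)).
split.
  rewrite -(size_map_poly (ratr : {rmorphism rat -> algC})).
  rewrite (root_size_gt1 _ (_ : root _ (- a ^+ 2 - 7%:R))) ?map_poly_eq0 ?Delta_neq0 //.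
  by rewrite -rootQbar_ratpoly Delta_root_of_Gamma_root.
move=> q size_q q_D; rewrite -dvdp_size_eqp // eqn_leq dvdp_leq ?Delta_neq0 //=.
apply: (@leq_trans (size GammaQ)).
  by rewrite !size_ratpoly size_Gamma -addn1 size_Delta_leq.
have nz_q : q != 0 by apply: contraTneq q_D => ->; rewrite dvd0p Delta_neq0.
have [b qb] : exists b, root (pQtoC q) b by apply/closed_rootP; rewrite size_map_poly.
have /Gamma_root_of_Delta_root[c Gc Dc] : rootQbar (Delta3k3 k) b.
  by rewrite rootQbar_ratpoly; apply: root_dvdp qb; rewrite dvdp_map.
have nz_qf : q \Po fpoly != 0 by rewrite comp_poly_eq0 ?size_fpoly.
have qf_c : root (pQtoC (q \Po fpoly)) c by rewrite /root horner_map_comp_fpoly Dc.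
have G_qf : GammaQ %| q \Po fpoly.
  by apply: irredp_dvdp_root G_irr nz_qf (_ : root (pQtoC GammaQ) c) qf_c; rewrite rootG.
have G'_qf : GammaQ \Po - 'X %| q \Po fpoly.
  by rewrite -fpoly_comp_opp comp_polyA dvdp_comp_poly.
have := dvdp_leq nz_qf (_ : GammaQ * (GammaQ \Po - 'X) %| _).
rewrite Gauss_dvdp // G_qf G'_qf => /(_ isT).
have size_G' : size (GammaQ \Po - 'X) = size GammaQ.
  by rewrite size_comp_poly2 // size_polyN size_polyX.
rewrite (size_mul (irredp_neq0 G_irr) nz_G') size_G'.
have : (size (q \Po fpoly)).-1 = ((size q).-1 * 2)%N by rewrite size_comp_poly size_fpoly.
have : (0 < size (q \Po fpoly))%N by rewrite size_poly_gt0.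
have : (0 < size q)%N by rewrite size_poly_gt0.
move: (size GammaQ) (size q) (size (q \Po fpoly)) => sG sq sqf; lia.
Qed.

Lemma Delta_irr_Gamma_irr : irreducible_poly DeltaQ -> irreducible_poly GammaQ.
Proof.
move=> D_irr.
have size_G : size GammaQ = (totient k * 3).+1 by rewrite size_ratpoly size_Gamma.
have G_sep : separable_poly GammaQ.
  by rewrite -(separable_map (ratr : {rmorphism rat -> algC})) pQtoC_ratpoly Gamma_separable.
split=> [|q size_q q_G]; first by rewrite size_G ltnS muln_gt0 totient_gt0 k_gt0.
have nz_G : GammaQ != 0 by rewrite -size_poly_gt0 size_G.
have nz_q : q != 0 by apply: contraNneq nz_G => q0; move: q_G; rewrite q0 dvd0p.
set r := GammaQ %/ q; have Dr : GammaQ = r * q by rewrite divpK.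
have nz_r : r != 0 by apply: contraNneq nz_G => r0; rewrite Dr r0 mul0r.
have [size_r | size_r] := eqVneq (size r) 1%N.
  by rewrite -dvdp_size_eqp // Dr size_mul // size_r add1n.
have [a qa] : exists a, root (pQtoC q) a by apply/closed_rootP; rewrite size_map_poly.
have [c rc] : exists c, root (pQtoC r) c by apply/closed_rootP; rewrite size_map_poly.
have G_root_of y : root (pQtoC q) y || root (pQtoC r) y -> rootQbar (Gamma_k k) y.
  by rewrite rootQbar_ratpoly Dr rmorphM rootM orbC.
have nz_N : opp_norm q != 0.
  apply: contra_neq (mulf_neq0 nz_q (_ : q \Po - 'X != 0)) => [N0|].
    by rewrite -opp_norm_comp_fpoly N0 comp_poly0.
  by rewrite comp_poly2_eq0 // size_polyN size_polyX.
have D_N : DeltaQ %| opp_norm q.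
  apply: irredp_dvdp_root D_irr nz_N (_ : root (pQtoC DeltaQ) (- a ^+ 2 - 7%:R)) _.
    by rewrite -rootQbar_ratpoly Delta_root_of_Gamma_root // G_root_of ?qa.
  by rewrite root_opp_norm qa.
have : root (pQtoC (opp_norm q)) (- c ^+ 2 - 7%:R).
  apply: root_dvdp (_ : root (pQtoC DeltaQ) _); first by rewrite dvdp_map.
  by rewrite -rootQbar_ratpoly Delta_root_of_Gamma_root // G_root_of ?rc ?orbT.
rewrite root_opp_norm => /orP[qc | q_nc].
  have r_q_coprime : coprimep (pQtoC r) (pQtoC q).
    by rewrite coprimep_map (separable_coprime G_sep) // -Dr.
  by have := coprimep_root r_q_coprime rc; rewrite -/(root _ _) qc.
have := Gamma_root_opp (G_root_of c _); rewrite rc orbT => /(_ isT).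
by rewrite G_root_of ?q_nc.
Qed.

End GammaDelta.

Theorem lemma2p9 (k : nat) (hk : (2 <= k)%N) :
  let f := fun a : algC => - a ^+ 2 - 7%:R in
  [/\ (forall a, rootQbar (Gamma_k k) a -> rootQbar (Delta3k3 k) (f a)),
      (forall a b, rootQbar (Gamma_k k) a -> rootQbar (Gamma_k k) b -> f a = f b -> a = b),
      (forall b, rootQbar (Delta3k3 k) b -> exists2 a, rootQbar (Gamma_k k) a & f a = b),
      (forall (s : {rmorphism algC -> algC}) a,
          rootQbar (Gamma_k k) a -> f (s a) = s (f a))
    & (irreducible_poly (ratpoly (Delta3k3 k)) <-> irreducible_poly (ratpoly (Gamma_k k)))].
Proof.
move=> f; split.
- exact: Delta_root_of_Gamma_root.
- exact: Gamma_root_sqr_inj.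
- exact: Gamma_root_of_Delta_root.
- by move=> s a _; rewrite /f rmorphB rmorphN rmorphXn rmorph_nat.
- by split; [apply: Delta_irr_Gamma_irr | apply: Gamma_irr_Delta_irr].
Qed.
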